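(* Let $p,q\in\mathbb{N}\cup\{0\}$, $N=p+q$, and let $\boldsymbol{\mu}_{p,q}: C_2^N\to C_2=\{\pm1\}$ be defined by \[ \boldsymbol{\mu}_{p,q}\big(\mathbf{e}_1^{a_1}\cdots\mathbf{e}_N^{a_N}\big) = (-1)^{\,a_{p+1}+\cdots+a_N + \sum_{1\le i<j\le N} a_ia_j}, \qquad a_i\in\{0,1\}, \] where $\mathbf{e}_1,\ldots,\mathbf{e}_N$ are the canonical generators of $C_2^N$. Then \[ \mathrm{Arf}(\boldsymbol{\mu}_{p,q}) = \mathrm{sign}\Big(\cos\frac{(p-q)\pi}{4} + \sin\frac{(p-q)\pi}{4}\Big) = \begin{cases} 1 & \text{if } p-q+1 \equiv 1,2,3 \pmod 8,\\ 0 & \text{if } p-q+1\equiv 0,4 \pmod 8,\\ -1 & \text{if } p-q+1 \equiv 5,6,7\pmod 8.\end{cases} \]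
   Context: $C_2=\{\pm1\}$ is the multiplicative group of order $2$ and $\mathbf{e}_i\in C_2^N$ has $-1$ in position $i$ and $1$ elsewhere. For a map $\boldsymbol{\mu}: C_2^N\to C_2$, the Arf invariant is $\mathrm{Arf}(\boldsymbol{\mu}) = 1$ if $|\boldsymbol{\mu}^{-1}(+1)| > |\boldsymbol{\mu}^{-1}(-1)|$, $0$ if they are equal, and $-1$ if $|\boldsymbol{\mu}^{-1}(+1)| < |\boldsymbol{\mu}^{-1}(-1)|$. $\mathrm{sign}(x)\in\{1,0,-1\}$ is the sign of the real number $x$, with $\mathrm{sign}(0)=0$. *)

From HB Require Import structures.
From mathcomp Require Import all_boot all_order all_algebra.
From mathcomp Require Import all_classical all_reals all_analysis.
Set Implicit Arguments. Unset Strict Implicit. Unset Printing Implicit Defensive.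
Import Order.TTheory GRing.Theory Num.Theory.
Local Open Scope ring_scope.

(* An element e_1^{a_1} ... e_N^{a_N} of C_2^N is represented by its exponent
   vector a : {ffun 'I_N -> bool} (a_i = 1 iff a i = true); this is a bijection.
   C_2 = {+1,-1} is represented inside int. *)
Definition C2N (N : nat) := {ffun 'I_N -> bool}.

Definition Arf (N : nat) (mu : C2N N -> int) : int :=
  let plus := #|[pred x | mu x == 1]| in
  let minus := #|[pred x | mu x == -1]| in
  if (minus < plus)%N then 1 else if plus == minus then 0 else -1.

(* mu_{p,q}(e_1^{a_1}...e_N^{a_N}) = (-1)^(a_{p+1}+...+a_N + sum_{i<j} a_i a_j),
   indices 0-based here: a_{p+1},...,a_N are a i with p <= i. *)
Definition mu_pq (p q : nat) (a : C2N (p + q)) : int :=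
  (-1) ^+ (\sum_(i < p + q | (p <= i)%N) (a i : nat)
           + \sum_(i < p + q) \sum_(j < p + q | (i < j)%N) (a i * a j)%N)%N.

Definition arf_cases (p q : nat) : int :=
  let r := ((p%:Z - q%:Z + 1) %% 8)%Z in
  if r \in [:: 1; 2; 3] then 1 else if r \in [:: 0; 4] then 0 else -1.

From HB Require Import structures.
From mathcomp Require Import all_boot all_order all_algebra.
From mathcomp Require Import all_classical all_reals all_analysis.
From mathcomp Require Import complex zify ring lra.
Import Order.TTheory GRing.Theory Num.Theory.
Local Open Scope ring_scope.

(* Since mu_pq is +-1-valued, its Arf invariant is the sign of its sum.  As
   sum_(i<j) a_i a_j = 'C(|a|, 2) and (-1)^'C(k, 2) = Re ((1 - i) i^k), that sum
   is Re ((1 - i) prod_j (1 + w_j)), with w_j = i on the first p coordinates and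
   w_j = -i on the last q, i.e. Re ((1 - i) (1 + i)^p (1 - i)^q).  Since
   cos(pi/4) (1 +- i) = e^(+-i pi/4), this is cos(pi/4)^-(p+q) times
   Re ((1 - i) e^(i (p - q) pi/4)) = (cos + sin)((p - q) pi/4).  As cos + sin
   changes sign under a shift by pi, its sign at multiples of pi/4 is read off
   from its values at 0, pi/4, pi/2 and 3pi/4. *)

Lemma Arf_sg_sum N (mu : C2N N -> int) :
  (forall a, mu a = 1 \/ mu a = -1) -> Arf mu = Num.sg (\sum_a mu a).
Proof.
move=> mu_sign.
have -> : \sum_a mu a = #|[pred a | mu a == 1]|%:Z - #|[pred a | mu a == -1]|%:Z.
  rewrite (bigID (fun a => mu a == 1)) /= -!natz -!sum1_card !natr_sum -sumrN.
  congr (_ + _); apply: eq_big => a; rewrite ?inE.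
  - by [].
  - by move/eqP.
  - by case: (mu_sign a) => ->.
  - by case: (mu_sign a) => ->.
rewrite /Arf; case: ltngtP => [lt_pm | lt_mp | ->].
- by rewrite gtr0_sg // subr_gt0 ltz_nat.
- by rewrite ltr0_sg // subr_lt0 ltz_nat.
- by rewrite subrr sgr0.
Qed.

Lemma mu_pq_sign p q (a : C2N (p + q)) : mu_pq a = 1 \/ mu_pq a = -1.
Proof. by rewrite /mu_pq -signr_odd; case: odd; [right | left]. Qed.

Lemma pair_sum_bin2 n (a : 'I_n -> bool) :
  (\sum_(i < n) \sum_(j < n | i < j) a i * a j)%N = 'C(\sum_(i < n) a i, 2).
Proof.
elim: n a => [|n IHn] a; first by rewrite !big_ord0.
rewrite !big_ord_recr /= [X in (_ + X)%N]big1 => [|j]; last first.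
  by rewrite ltnNge -ltnS ltn_ord.
under eq_bigr => i _ do rewrite big_mkcond big_ord_recr /= ltn_ord -big_mkcond.
rewrite addn0 big_split /= (IHn (fun i => a (widen_ord (leqnSn n) i))).
rewrite -big_distrl /=.
by case: (a ord_max); rewrite ?muln1 ?muln0 ?addn0 ?addn1 // binS bin1 addnC.
Qed.

Section GaussSum.
Variable R : rcfType.
Local Open Scope complex_scope.

(* In the body of a big operator, parsed in ring_scope, a bare 'i would be
   Num's imaginary unit rather than the complex number 0 +i* 1. *)

Lemma Re_realM a (z : R[i]) : complex.Re (a%:C * z) = a * complex.Re z.
Proof. by case: z => x y; rewrite /= mul0r subr0. Qed.

Lemma sign_bin2E k : (-1) ^+ 'C(k, 2) = complex.Re ((1 -i* 1) * 'i%C ^+ k : R[i]).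
Proof.
suff -> : (1 -i* 1) * 'i%C ^+ k = (-1) ^+ 'C(k, 2) -i* (-1) ^+ 'C(k.+1, 2) :> R[i].
  by [].
elim: k => [|k IHk]; first by rewrite expr0 mulr1.
rewrite exprS mulrCA IHk [in RHS]binS bin1.
apply/eqP; rewrite eq_complex /= !mul0r !mul1r sub0r add0r opprK !binS !bin1.
rewrite eqxx bin0 addn1 addnS -addnA addnn -mul2n exprS exprD exprM sqrrN !expr1n.
by rewrite mulr1 mulN1r opprK eqxx.
Qed.

Lemma mu_pq_Re p q (a : C2N (p + q)) :
  (mu_pq a)%:~R = complex.Re ((1 -i* 1) *
     \prod_(j < p + q) ((-1) ^+ ((p <= j)%N && a j) * 'i%C ^+ a j) : R[i]).
Proof.
rewrite /mu_pq pair_sum_bin2 rmorph_sign exprD big_split /= !prodrXr mulrCA.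
rewrite -(rmorph_sign (real_complex R)) Re_realM -sign_bin2E big_mkcond.
by congr ((-1) ^+ _ * _); apply: eq_bigr => i _; case: ifP.
Qed.

Lemma sum_mu_pq p q :
  (\sum_(a : C2N (p + q)) mu_pq a)%:~R =
    complex.Re ((1 -i* 1) * (1 +i* 1) ^+ p * (1 -i* 1) ^+ q : R[i]).
Proof.
have weight_sum j : \sum_(b : bool) (-1) ^+ ((p <= j)%N && b) * 'i%C ^+ b =
    if (p <= j)%N then 1 -i* 1 else 1 +i* 1 :> R[i].
  rewrite big_bool /=; case: leqP => _; rewrite ?expr0 ?expr1 ?mul1r ?mulN1r;
  by apply/eqP; rewrite eq_complex /= ?oppr0 ?add0r ?addr0 !eqxx.
rewrite -mulrA.
have -> : (1 +i* 1) ^+ p * (1 -i* 1) ^+ q = \prod_(j < p + q)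
    \sum_(b : bool) (-1) ^+ ((p <= j)%N && b) * 'i%C ^+ b :> R[i].
  rewrite big_split_ord /= -[p in LHS]card_ord -[q in LHS]card_ord -!prodr_const.
  congr (_ * _); apply: eq_bigr => j _; rewrite weight_sum ?leq_addr //.
  by rewrite leqNgt ltn_ord.
rewrite bigA_distr_bigA mulr_sumr.
rewrite (raddf_sum (@complex.Re R : Rcomplex R -> R)) rmorph_sum /=.
by apply: eq_bigr => a _; rewrite mu_pq_Re.
Qed.

End GaussSum.

Section Trigonometry.
Variable R : realType.
Local Open Scope complex_scope.

Definition cis (x : R) : R[i] := cos x +i* sin x.

Lemma cisD x y : cis (x + y) = cis x * cis y.
Proof. by apply/eqP; rewrite eq_complex /= cosD sinD eqxx /= addrC eqxx. Qed.

Lemma cisMn n x : cis (x *+ n) = cis x ^+ n.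
Proof.
elim: n => [|n IHn]; first by rewrite mulr0n expr0 /cis cos0 sin0.
by rewrite mulrS addrC cisD IHn exprSr.
Qed.

Lemma sin_piquarter : sin (pi / 4) = cos (pi / 4) :> R.
Proof. by rewrite -cosBpihalf (_ : pi / 4 - pi / 2 = - (pi / 4)) ?cosN //; lra. Qed.

Lemma cos_piquarter_gt0 : 0 < cos (pi / 4) :> R.
Proof. by apply: cos_gt0_pihalf; have := pi_gt0 R; lra. Qed.

Lemma cis_piquarter : cis (pi / 4) = (cos (pi / 4))%:C * (1 +i* 1).
Proof.
apply/eqP; rewrite eq_complex /= sin_piquarter.
by apply/andP; split; apply/eqP; lra.
Qed.

Lemma cis_Npiquarter : cis (- (pi / 4)) = (cos (pi / 4))%:C * (1 -i* 1).
Proof.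
apply/eqP; rewrite eq_complex /= cosN sinN sin_piquarter.
by apply/andP; split; apply/eqP; lra.
Qed.

Lemma Re_1Ni_cis x : complex.Re ((1 -i* 1) * cis x) = cos x + sin x.
Proof. by rewrite /= !mul1r mulN1r opprK. Qed.

Lemma sum_mu_pq_cos_sin p q :
  cos (pi / 4) ^+ (p + q) * (\sum_(a : C2N (p + q)) mu_pq a)%:~R
    = cos ((p%:R - q%:R) * pi / 4) + sin ((p%:R - q%:R) * pi / 4) :> R.
Proof.
rewrite (sum_mu_pq R) -Re_realM rmorphXn /= exprD.
set c := (cos (pi / 4))%:C.
have -> : c ^+ p * c ^+ q * ((1 -i* 1) * (1 +i* 1) ^+ p * (1 -i* 1) ^+ q)
    = (1 -i* 1) * (c * (1 +i* 1)) ^+ p * (c * (1 -i* 1)) ^+ q.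
  by rewrite !exprMn; ring.
rewrite /c -cis_piquarter -cis_Npiquarter -!cisMn -mulrA -cisD Re_1Ni_cis.
by congr (cos _ + sin _); ring.
Qed.

Lemma cos_add_sin_alternating : alternating (fun x : R => cos x + sin x) pi.
Proof. by move=> x; rewrite cosDpi sinDpi opprD. Qed.

Lemma sg_cos_add_sin_quarter k :
  Num.sg (cos (k%:R * pi / 4) + sin (k%:R * pi / 4)) =
    (-1) ^+ (k %/ 4)%N * (k %% 4 != 3)%N%:R :> R.
Proof.
have -> : k%:R * pi / 4 = (k %% 4)%:R * pi / 4 + pi *+ (k %/ 4) :> R.
  by rewrite [in LHS](divn_eq k 4) natrD natrM -mulr_natr; lra.
rewrite (alternatingn cos_add_sin_alternating) sgrM sgrX sgrN1; congr (_ * _).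
have : (k %% 4 < 4)%N by rewrite ltn_pmod.
case: (k %% 4)%N => [|[|[|[|r]]]] //= _.
- by rewrite !mul0r cos0 sin0 addr0 sgr1.
- by rewrite mul1r sin_piquarter gtr0_sg // addr_gt0 // cos_piquarter_gt0.
- by rewrite (_ : 2 * pi / 4 = pi / 2) ?cos_pihalf ?sin_pihalf ?add0r ?sgr1 //; lra.
- rewrite (_ : 3%:R * pi / 4 = pi / 4 + pi / 2); last by lra.
  by rewrite cosDpihalf sinDpihalf sin_piquarter addNr sgr0.
Qed.

End Trigonometry.

Lemma arf_casesE p q :
  arf_cases p q = (-1) ^+ ((p + 7 * q) %/ 4)%N * ((p + 7 * q) %% 4 != 3)%N%:R.
Proof.
rewrite /arf_cases.
set m := ((p + 7 * q) %/ 4)%N; set r := ((p + 7 * q) %% 4)%N.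
have -> : ((p%:Z - q%:Z + 1) %% 8)%Z = ((4 * (m %% 2) + r + 1) %% 8)%N%:Z.
  by rewrite /m /r; lia.
rewrite -signr_odd -modn2.
have : (r < 4)%N by rewrite ltn_pmod.
have : (m %% 2 < 2)%N by rewrite ltn_pmod.
by case: (m %% 2)%N => [|[|k]]; case: r => [|[|[|[|r]]]].
Qed.

Lemma sg_cos_add_sin_arf_cases (R : realType) p q :
  Num.sg (cos ((p%:R - q%:R) * pi / 4) + sin ((p%:R - q%:R) * pi / 4) : R)
    = (arf_cases p q)%:~R.
Proof.
have := alternatingn (@cos_add_sin_alternating R) (2 * q)%N ((p%:R - q%:R) * pi / 4).
rewrite exprM sqrrN !expr1n mul1r => <-.
have -> : (p%:R - q%:R) * pi / 4 + pi *+ (2 * q)%N = (p + 7 * q)%N%:R * pi / 4 :> R.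
  by rewrite -[pi *+ _]mulr_natr natrD !natrM; field.
by rewrite sg_cos_add_sin_quarter arf_casesE rmorphM rmorph_sign rmorph_nat.
Qed.

Lemma Arf_mu_pq (R : realType) p q :
  (Arf (@mu_pq p q))%:~R
    = Num.sg (cos ((p%:R - q%:R) * pi / 4) + sin ((p%:R - q%:R) * pi / 4) : R).
Proof.
rewrite Arf_sg_sum; last exact: mu_pq_sign.
rewrite intr_sg -sum_mu_pq_cos_sin sgrM.
by rewrite (gtr0_sg (exprn_gt0 _ (cos_piquarter_gt0 R))) mul1r.
Qed.

Theorem theorem7p1 (R : realType) (p q : nat) :
  ((Arf (@mu_pq p q))%:~R : R)
    = Num.sg (cos ((p%:R - q%:R) * pi / 4) + sin ((p%:R - q%:R) * pi / 4) : R)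
  /\ Arf (@mu_pq p q) = arf_cases p q.
Proof.
split; first exact: Arf_mu_pq.
by apply: (@intr_inj R); rewrite Arf_mu_pq sg_cos_add_sin_arf_cases.
Qed.
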